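(* For any time warps $f$ and $g$: $\mathrm{last}(f\circ g)=\omega$ if, and only if, $\mathrm{last}(g)=\mathrm{last}(f)=\omega$; and $\mathrm{last}(f^\star)=\omega$ if, and only if, $\mathrm{last}(f)=\omega$.
   Context: Let $\omega^+=\omega\cup\{\omega\}$. A time warp is a join-preserving map $f\colon\omega^+\to\omega^+$, time warps being ordered pointwise. $p(m)=\bigvee\{k\in\omega\mid k<m\}$; $f^\star$ is the largest time warp $h$ with $f\circ h\le p$. For a time warp $f$, $\mathrm{last}(f)=\min\{m\in\omega^+\mid f(m)=f(\omega)\}$. *)

From Stdlib Require Import Arith.

(* omega^+ = omega ∪ {omega} *)
Inductive omp : Type := Fin (n : nat) | Om.

Definition ole (x y : omp) : Prop :=
  match x, y with
  | Fin m, Fin n => m <= n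
  | _, Om => True
  | Om, Fin _ => False
  end.

Definition is_join (S : omp -> Prop) (x : omp) : Prop :=
  (forall y, S y -> ole y x) /\
  (forall z, (forall y, S y -> ole y z) -> ole x z).

Definition image (f : omp -> omp) (S : omp -> Prop) : omp -> Prop :=
  fun y => exists x, S x /\ f x = y.

Definition time_warp (f : omp -> omp) : Prop :=
  forall S x, is_join S x -> is_join (image f S) (f x).

Definition fle (f g : omp -> omp) : Prop := forall x, ole (f x) (g x).

(* p(m) = \/ {k in omega | k < m}, written out:
   p(0) = 0 (empty join), p(n+1) = n, p(omega) = omega *)
Definition p (m : omp) : omp :=
  match m with
  | Fin 0 => Fin 0
  | Fin (S n) => Fin n
  | Om => Om
  end.

Definition is_star (f h : omp -> omp) : Prop :=
  time_warp h /\ fle (fun x => f (h x)) p /\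
  (forall h', time_warp h' -> fle (fun x => f (h' x)) p -> fle h' h).

Definition is_last (f : omp -> omp) (m : omp) : Prop :=
  f m = f Om /\ (forall m', f m' = f Om -> ole m m').

(* A time warp f is monotone, fixes 0 and is continuous at omega: f(omega) is
   the supremum of the f(n).  Hence last(f) = omega says exactly that f is
   unbounded (f(omega) = omega) but finite on finite arguments, and both
   properties are transferred through composition.  For f^star, the key fact
   is the residuation f(v) <= c ==> v <= f^star(c+1), witnessed by the time
   warp that is 0 below c+1 and v from c+1 on: it turns boundedness of f into
   f^star(c+1) = omega, and a finite value f(j+1) = a into f^star(a+1) > j. *)

From Stdlib Require Import Arith Lia Classical.

Lemma ole_refl x : ole x x.
Proof. destruct x; simpl; auto. Qed.

Lemma ole_trans x y z : ole x y -> ole y z -> ole x z.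
Proof. destruct x, y, z; simpl; intros; auto; try lia; contradiction. Qed.

Lemma ole_antisym x y : ole x y -> ole y x -> x = y.
Proof. destruct x, y; simpl; intros; auto; try contradiction. f_equal; lia. Qed.

Lemma ole_Om x : ole x Om.
Proof. destruct x; exact I. Qed.

Lemma Fin0_ole x : ole (Fin 0) x.
Proof. destruct x; simpl; auto; lia. Qed.

Lemma Om_ole x : ole Om x -> x = Om.
Proof. destruct x; simpl; tauto. Qed.

Lemma nole_Fin_S n y : ~ ole (Fin (S n)) y -> ole y (Fin n).
Proof. destruct y; simpl; intros H; [lia | exfalso; exact (H I)]. Qed.

Lemma p_Fin_neq_Om n : p (Fin n) <> Om.
Proof. destruct n; discriminate. Qed.

Lemma join_approx A x n :
  is_join A x -> ole (Fin (S n)) x -> exists y, A y /\ ole (Fin (S n)) y.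
Proof.
  intros [_ Hlub] Hx. apply NNPP. intros Hno.
  assert (Hbound : forall y, A y -> ole y (Fin n)).
  { intros y Sy. apply nole_Fin_S. intros Hy. apply Hno. eauto. }
  assert (H := ole_trans _ _ _ Hx (Hlub _ Hbound)). simpl in H. lia.
Qed.

Lemma is_join_Fin : is_join (fun y => exists n, y = Fin n) Om.
Proof.
  split.
  - intros y _. apply ole_Om.
  - intros [k|] Hz; [|exact I].
    specialize (Hz (Fin (S k)) (ex_intro _ _ eq_refl)). simpl in Hz. lia.
Qed.

Section TimeWarp.

Variable f : omp -> omp.
Hypothesis Hf : time_warp f.

Lemma tw_mono x y : ole x y -> ole (f x) (f y).
Proof.
  intros Hxy.
  assert (J : is_join (fun z => z = x \/ z = y) y).
  { split.
    - intros z [-> | ->]; auto using ole_refl.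
    - intros z Hz. apply Hz. auto. }
  apply (proj1 (Hf _ _ J)). exists x. auto.
Qed.

Lemma tw_zero : f (Fin 0) = Fin 0.
Proof.
  assert (J : is_join (fun _ => False) (Fin 0)).
  { split; [intros _ [] | intros z _; apply Fin0_ole]. }
  apply ole_antisym; [|apply Fin0_ole].
  apply (proj2 (Hf _ _ J)). intros y [x [[] _]].
Qed.

Lemma tw_Om_approx k : ole (Fin k) (f Om) -> exists n, ole (Fin k) (f (Fin n)).
Proof.
  destruct k as [|k]; intros Hk.
  - exists 0. apply Fin0_ole.
  - destruct (join_approx _ _ _ (Hf _ _ is_join_Fin) Hk) as [y [[x [[n ->] <-]] Hy]].
    eauto.
Qed.

Lemma is_last_Om_tw :
  is_last f Om <-> f Om = Om /\ forall n, f (Fin n) <> Om.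
Proof.
  split.
  - intros [_ Hmin].
    assert (HOm : f Om = Om).
    { destruct (f Om) as [[|j]|] eqn:E; auto; exfalso.
      - apply (Hmin (Fin 0)), tw_zero.
      - destruct (tw_Om_approx (S j)) as [n Hn]; [rewrite E; apply ole_refl|].
        apply (Hmin (Fin n)), ole_antisym; [|exact Hn].
        rewrite <- E. apply tw_mono, ole_Om. }
    split; [exact HOm|]. intros n E. apply (Hmin (Fin n)). congruence.
  - intros [HOm Hfin]. split; [reflexivity|].
    intros [n|] E; [exfalso; apply (Hfin n); congruence | exact I].
Qed.

End TimeWarp.

Lemma time_warp_intro f :
  (forall x y, ole x y -> ole (f x) (f y)) ->
  f (Fin 0) = Fin 0 ->
  (forall z, (forall n, ole (f (Fin n)) z) -> ole (f Om) z) ->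
  time_warp f.
Proof.
  intros Hmono Hzero Hsup A x Hx. split.
  - intros y [w [Aw <-]]. apply Hmono, (proj1 Hx), Aw.
  - intros z Hz.
    assert (HzA : forall w, A w -> ole (f w) z) by (intros w Aw; apply Hz; exists w; auto).
    destruct x as [[|m]|].
    + rewrite Hzero. apply Fin0_ole.
    + destruct (join_approx _ _ _ Hx (ole_refl _)) as [y [Ay Hy]].
      replace (Fin (S m)) with y by (apply ole_antisym; [apply (proj1 Hx) |]; auto).
      auto.
    + apply Hsup. intros n.
      destruct (join_approx _ _ n Hx I) as [y [Ay Hy]].
      apply ole_trans with (f y); [apply Hmono | auto].
      apply ole_trans with (Fin (S n)); [simpl; lia | exact Hy].
Qed.

Lemma time_warp_comp f g :
  time_warp f -> time_warp g -> time_warp (fun x => f (g x)).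
Proof.
  intros Hf Hg A x Hx. destruct (Hf _ _ (Hg _ _ Hx)) as [Hub Hlub]. split.
  - intros y [w [Sw <-]]. apply Hub. exists (g w). split; [exists w|]; auto.
  - intros z Hz. apply Hlub. intros y [u [[w [Sw <-]] <-]].
    apply Hz. exists w. auto.
Qed.

Lemma is_last_Om f : is_last f Om <-> forall n, f (Fin n) <> f Om.
Proof.
  split.
  - intros [_ Hmin] n E. exact (Hmin _ E).
  - intros H. split; [reflexivity|]. intros [n|] E; [exfalso; exact (H n E) | exact I].
Qed.

Lemma is_last_comp_Om f g : time_warp f -> time_warp g ->
  is_last (fun x => f (g x)) Om <-> is_last g Om /\ is_last f Om.
Proof.
  intros Hf Hg. split.
  - intros Hfg.
    assert (Hlg : is_last g Om).
    { apply is_last_Om. intros n E. apply (proj1 (is_last_Om _) Hfg n). simpl. congruence. }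
    split; [exact Hlg|].
    apply (is_last_Om_tw _ Hg) in Hlg as [HgOm _].
    apply (is_last_Om_tw _ (time_warp_comp _ _ Hf Hg)) in Hfg as [HfgOm Hfin].
    simpl in HfgOm, Hfin. rewrite HgOm in HfgOm.
    apply (is_last_Om_tw _ Hf). split; [exact HfgOm|].
    intros m Hm. destruct (tw_Om_approx _ Hg m) as [n Hn]; [rewrite HgOm; exact I|].
    apply (Hfin n), Om_ole. rewrite <- Hm. apply tw_mono; auto.
  - intros [Hlg Hlf].
    apply (is_last_Om_tw _ Hg) in Hlg as [HgOm Hgfin].
    apply (is_last_Om_tw _ Hf) in Hlf as [HfOm Hffin].
    apply (is_last_Om_tw _ (time_warp_comp _ _ Hf Hg)). simpl. split.
    + congruence.
    + intros n. specialize (Hgfin n). destruct (g (Fin n)); [auto | congruence].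
Qed.

Definition threshold (N : nat) (v : omp) (x : omp) : omp :=
  match x with
  | Fin n => if n <? N then Fin 0 else v
  | Om => v
  end.

Lemma threshold_time_warp N v : 0 < N -> time_warp (threshold N v).
Proof.
  intros HN. apply time_warp_intro.
  - intros [a|] [b|]; simpl; intros Hab; try contradiction.
    + destruct (a <? N) eqn:Ea; [apply Fin0_ole|].
      destruct (b <? N) eqn:Eb; [|apply ole_refl].
      apply Nat.ltb_ge in Ea. apply Nat.ltb_lt in Eb. lia.
    + destruct (a <? N); auto using ole_refl, Fin0_ole.
    + apply ole_refl.
  - simpl. destruct (0 <? N) eqn:E; [reflexivity | apply Nat.ltb_ge in E; lia].
  - intros z Hz. specialize (Hz N). simpl in Hz. rewrite Nat.ltb_irrefl in Hz. exact Hz.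
Qed.

Section Star.

Variables f fs : omp -> omp.
Hypothesis Hf : time_warp f.
Hypothesis Hstar : is_star f fs.

Lemma star_time_warp : time_warp fs.
Proof. exact (proj1 Hstar). Qed.

Lemma star_ole_p n : ole (f (fs (Fin n))) (p (Fin n)).
Proof. exact (proj1 (proj2 Hstar) (Fin n)). Qed.

Lemma star_residual v c : ole (f v) (Fin c) -> ole v (fs (Fin (S c))).
Proof.
  intros Hv.
  assert (Hle : fle (fun x => f (threshold (S c) v x)) p).
  { intros [n|]; simpl; [|apply ole_Om].
    destruct (n <? S c) eqn:E.
    - rewrite (tw_zero _ Hf). apply Fin0_ole.
    - apply Nat.ltb_ge in E. apply ole_trans with (Fin c); [exact Hv|].
      destruct n; simpl; lia. }
  assert (Htw := threshold_time_warp (S c) v (Nat.lt_0_succ c)).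
  assert (H := proj2 (proj2 Hstar) _ Htw Hle (Fin (S c))). simpl in H. rewrite Nat.ltb_irrefl in H. exact H.
Qed.

Lemma star_finite_iff : (forall n, fs (Fin n) <> Om) <-> f Om = Om.
Proof.
  split.
  - intros Hfin. destruct (f Om) as [c|] eqn:E; [exfalso | reflexivity].
    apply (Hfin (S c)), Om_ole, star_residual. rewrite E. apply ole_refl.
  - intros HOm n E. apply (p_Fin_neq_Om n), Om_ole.
    rewrite <- HOm, <- E. apply star_ole_p.
Qed.

Lemma star_Om_iff : f Om = Om -> (fs Om = Om <-> forall n, f (Fin n) <> Om).
Proof.
  intros HOm. split.
  - intros HsOm m Hm.
    destruct (tw_Om_approx _ star_time_warp m) as [n Hn]; [rewrite HsOm; exact I|].
    apply (p_Fin_neq_Om n), Om_ole. rewrite <- Hm.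
    apply ole_trans with (f (fs (Fin n))); [apply tw_mono; auto | apply star_ole_p].
  - intros Hfin. destruct (fs Om) as [j|] eqn:E; [exfalso | reflexivity].
    destruct (f (Fin (S j))) as [a|] eqn:Ea; [| exact (Hfin (S j) Ea)].
    assert (H := star_residual (Fin (S j)) a).
    rewrite Ea in H. specialize (H (ole_refl _)).
    assert (H' := tw_mono _ star_time_warp _ _ (ole_Om (Fin (S a)))).
    rewrite E in H'. assert (C := ole_trans _ _ _ H H'). simpl in C. lia.
Qed.

Lemma is_last_star_Om : is_last fs Om <-> is_last f Om.
Proof.
  rewrite (is_last_Om_tw _ star_time_warp), (is_last_Om_tw _ Hf), star_finite_iff.
  split; intros [H1 H2]; split; auto; now apply star_Om_iff.
Qed.

End Star.

Theorem lemma2p6 :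
  (forall f g : omp -> omp, time_warp f -> time_warp g ->
     (is_last (fun x => f (g x)) Om <-> (is_last g Om /\ is_last f Om)))
  /\
  (forall f fstar : omp -> omp, time_warp f -> is_star f fstar ->
     (is_last fstar Om <-> is_last f Om)).
Proof.
  split.
  - exact is_last_comp_Om.
  - exact is_last_star_Om.
Qed.
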